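(* Let $G_1$ be an $r_1$-regular finite simple graph and $G_2$ an $r_2$-regular finite simple graph with $r_1>r_2$, and let $p_i=|V(G_i)|$, $q_i=|E(G_i)|$ for $i=1,2$. Then $$\nu^*(G_1\sqcup G_2)=\nu^*(G_1)+\nu^*(G_2)+2q_1(p_2+q_2),$$ where $\sqcup$ denotes disjoint union.
   Context: For a finite simple graph $G=(V,E)$ with $\ell=|V|+|E|$, a construction sequence (c-sequence) is a bijection $x:\{1,\dots,\ell\}\to V\sqcup E$ such that every edge $e=uw$ satisfies $x^{-1}(e)>\max\{x^{-1}(u),x^{-1}(w)\}$. The cost of $x$ is $\nu(x)=\sum_{e=uw\in E}\big(2x^{-1}(e)-x^{-1}(u)-x^{-1}(w)\big)$, and $\nu^*(G)$ is the maximum of $\nu(x)$ over all c-sequences for $G$. *)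

From mathcomp Require Import all_boot.
Set Implicit Arguments. Unset Strict Implicit. Unset Printing Implicit Defensive.

Section Graphs.
Variable T : finType.
Variable e : rel T.

Definition simple_graph := symmetric e /\ irreflexive e.

Definition regular (r : nat) := forall v : T, #|[set w | e v w]| = r.

Definition is_edge (A : {set T}) : bool :=
  [exists u, exists w, e u w && (A == [set u; w])].
Definition edge := {A : {set T} | is_edge A}.

Definition elt := (T + edge)%type.
Definition ell := #|T| + #|{: edge}|.

(* For a sequence x listing V ⊔ E, x^{-1}(a) (1-indexed position). *)
Definition pos (x : seq elt) (a : elt) : nat := (index a x).+1.

(* A c-sequence: a bijection {1..ell} -> V ⊔ E (a duplicate-free ell-tuple,
   ell = |V ⊔ E|), each edge placed after both endpoints. *)
Definition is_cseq (x : ell.-tuple elt) : bool :=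
  uniq x &&
  [forall A : edge, forall u in val A, pos x (inl u) < pos x (inr A)].

Definition cost (x : seq elt) : nat :=
  \sum_(A : edge) (2 * pos x (inr A) - \sum_(u in val A) pos x (inl u)).

Definition nu_star : nat := \max_(x : ell.-tuple elt | is_cseq x) cost x.

End Graphs.

Definition sum_rel (T1 T2 : finType) (e1 : rel T1) (e2 : rel T2) : rel (T1 + T2) :=
  fun a b => match a, b with
             | inl x, inl y => e1 x y
             | inr x, inr y => e2 x y
             | _, _ => false
             end.

From mathcomp Require Import all_boot zify.
Set Implicit Arguments. Unset Strict Implicit. Unset Printing Implicit Defensive.

(* Every element of V ⊔ E occupies one of the positions 1..ℓ, and each edge
   contributes twice its own position minus those of its two endpoints, so
   for every c-sequence x
     ν(x) + Σ_v (deg v + 2) x⁻¹(v) = 2·C(ℓ+1, 2).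
   Maximizing ν thus amounts to minimizing the vertex load
   Σ_v (deg v + 2) x⁻¹(v).  Since positions are distinct, any k elements sit
   at positions summing to at least C(k+1, 2), and placing the vertices first
   attains this.  For an r-regular graph this gives
   ν* = 2C(ℓ+1, 2) − (r+2)C(p+1, 2); for G₁ ⊔ G₂ with r₂ ≤ r₁ the load is
   (r₂+2)·(sum over all vertices) + (r₁−r₂)·(sum over V(G₁)), minimized by
   listing V(G₁), then V(G₂), then the edges.  Comparing the three closed
   forms, with the handshake identities r_i p_i = 2 q_i, gives the formula. *)

Lemma bin2S_add m n : 'C((m + n).+1, 2) = 'C(m.+1, 2) + 'C(n.+1, 2) + m * n.
Proof.
elim: n => [|n IHn]; first by rewrite addn0 muln0 addn0 (@bin_small 1 2) ?addn0.
have binS2 k : 'C(k.+2, 2) = 'C(k.+1, 2) + k.+1 by rewrite binS bin1.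
by rewrite addnS !binS2 IHn; lia.
Qed.

Lemma bin2_size_leq_sumn (s : seq nat) : uniq s -> 'C(size s, 2) <= sumn s.
Proof.
have [B] : exists B, all (gtn B) s.
  exists (\max_(i <- s) i).+1; apply/allP => i si /=.
  by rewrite ltnS (leq_bigmax_seq i).
elim: B s => [|B IHB] s; first by case: s.
move=> s_ltB us; case sB: (B \in s); last first.
  apply: IHB us; apply/allP => i si; move: (allP s_ltB i si).
  by rewrite /= ltnS leq_eqVlt; case: eqP => [iB|//]; rewrite -iB si in sB.
have s_rem := perm_to_rem sB; have u_rem := rem_uniq B us.
have rem_ltB : {subset rem B s <= iota 0 B}.
  move=> i i_rem; rewrite mem_iota /= add0n.
  have := allP s_ltB i (mem_rem i_rem); rewrite /= ltnS leq_eqVlt.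
  by case: eqP => [iB|//]; rewrite iB mem_rem_uniqF in i_rem.
rewrite (perm_size s_rem) (perm_sumn s_rem) /= binS bin1 addnC leq_add //.
  by have := uniq_leq_size u_rem rem_ltB; rewrite size_iota.
apply: IHB u_rem; apply/allP => i /rem_ltB; by rewrite mem_iota.
Qed.

Lemma sum_index_uniq (X : eqType) (s : seq X) :
  uniq s -> \sum_(a <- s) index a s = 'C(size s, 2).
Proof.
elim: s => [|a s IHs] /=; first by rewrite big_nil.
case/andP => a_s us; rewrite big_cons eqxx add0n binS bin1 -IHs // -sum1_size.
rewrite -big_split /=; apply: eq_big_seq => v vs.
by rewrite ifN ?addn1 //; apply: contraNneq a_s => ->.
Qed.

Lemma sum_index_enum (X : finType) (s : seq X) :
  uniq s -> (forall a, a \in s) -> \sum_a (index a s).+1 = 'C(#|X|.+1, 2).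
Proof.
move=> us s_full; have s_enum : perm_eq (enum X) s.
  by apply: uniq_perm (enum_uniq X) us _ => a; rewrite mem_enum s_full.
rewrite -big_enum (perm_big s) //=.
under eq_bigr do rewrite -addn1.
by rewrite big_split /= sum_index_uniq // sum1_size binS bin1 cardE (perm_size s_enum).
Qed.

Lemma bin2_card_leq_sum_index (U : finType) (X : eqType) (g : U -> X) (x : seq X) :
  injective g -> (forall u, g u \in x) -> 'C(#|U|, 2) <= \sum_u index (g u) x.
Proof.
move=> g_inj gx; have idx_inj : injective (fun u => index (g u) x).
  by move=> u v /(congr1 (nth (g u) x)); rewrite !nth_index // => /g_inj.
have := bin2_size_leq_sumn (etrans (map_inj_uniq idx_inj _) (enum_uniq U)).
by rewrite size_map -cardE sumnE big_map big_enum.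
Qed.

Section SimpleGraph.
Variables (T : finType) (e : rel T).

Definition deg (v : T) : nat := #|[set w | e v w]|.

Lemma edgeP (A : edge e) : exists u w, e u w /\ val A = [set u; w].
Proof. by case: A => A /= /existsP [u /existsP [w /andP [euw /eqP ->]]]; exists u, w. Qed.

Lemma card_edge_le2 (A : edge e) : #|val A| <= 2.
Proof. by have [u [w [_ ->]]] := edgeP A; rewrite cards2; case: (u != w). Qed.

Hypothesis sg : simple_graph e.

Lemma card_edge (A : edge e) : #|val A| = 2.
Proof.
case: sg => _ irr; have [u [w [euw ->]]] := edgeP A.
by rewrite cards2; case: eqP euw => [->|//]; rewrite irr.
Qed.

Lemma card_edges_at (u : T) : #|[set A : edge e | u \in val A]| = deg u.
Proof.
case: sg => sym irr; rewrite -(card_imset _ val_inj).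
have -> : val @: [set A : edge e | u \in val A] = (fun w => [set u; w]) @: [set w | e u w].
  apply/setP => B; apply/imsetP/imsetP => [[A] | [w]]; rewrite inE.
    have [a [b [eab ->]]] := edgeP A; rewrite !inE => /orP [] /eqP -> ->.
      by exists b; rewrite ?inE.
    by exists a; [rewrite inE sym | rewrite setUC].
  move=> euw ->; have uw_edge : is_edge e [set u; w].
    by apply/existsP; exists u; apply/existsP; exists w; rewrite euw eqxx.
  by exists (exist (is_edge e) _ uw_edge); rewrite // inE /= set21.
rewrite card_in_imset // => w1 w2; rewrite !inE => euw1 euw2 uw12.
have : w1 \in [set u; w2] by rewrite -uw12 set22.
by rewrite !inE => /orP [] /eqP // w1u; rewrite w1u irr in euw1.
Qed.

Lemma sum_edge_ends (f : T -> nat) :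
  \sum_(A : edge e) \sum_(u in val A) f u = \sum_u deg u * f u.
Proof.
rewrite (exchange_big_dep xpredT) //=; apply: eq_bigr => u _.
by rewrite -card_edges_at -sum_nat_const; apply: eq_bigl => A; rewrite inE.
Qed.

Lemma handshake : \sum_u deg u = 2 * #|{: edge e}|.
Proof.
rewrite -(eq_bigr _ (fun u _ => muln1 (deg u))) -(sum_edge_ends (fun=> 1)).
rewrite mulnC -sum_nat_const.
by apply: eq_bigr => A _; rewrite sum_nat_const muln1 card_edge.
Qed.

End SimpleGraph.

Section ConstructionSequences.
Variables (T : finType) (e : rel T).
Implicit Type x : (ell e).-tuple (elt e).

Lemma card_elt : #|{: elt e}| = ell e.
Proof. exact: card_sum. Qed.

Lemma mem_cseq x a : is_cseq x -> a \in x.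
Proof.
case/andP => ux _; have le_enum_x : size (enum {: elt e}) <= size x.
  by rewrite size_tuple -cardE card_elt.
by have [_ ->] := uniq_min_size ux (fun a _ => mem_enum _ a) le_enum_x; rewrite mem_enum.
Qed.

Lemma sum_pos_cseq x : is_cseq x -> \sum_a pos x a = 'C((ell e).+1, 2).
Proof.
move=> cx; rewrite (sum_index_enum _ (fun a => mem_cseq a cx)) ?card_elt //.
by case/andP: cx.
Qed.

Lemma bin2_card_leq_sum_pos (U : finType) (g : U -> elt e) x :
  injective g -> is_cseq x -> 'C(#|U|.+1, 2) <= \sum_u pos x (g u).
Proof.
move=> g_inj cx; rewrite binS bin1 /pos.
under eq_bigr do rewrite -addn1.
rewrite big_split /= sum_nat_const muln1 leq_add2r.
exact: bin2_card_leq_sum_index (fun u => mem_cseq (g u) cx).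
Qed.

Lemma vertices_first_cseq (s : seq T) : uniq s -> (forall v, v \in s) ->
  exists2 z : (ell e).-tuple (elt e), is_cseq z & forall v, pos z (inl v) = (index v s).+1.
Proof.
move=> us s_full; set z := map inl s ++ map inr (enum {: edge e}).
have size_z : size z == ell e.
  by rewrite size_cat !size_map -enumT -cardT -(card_uniqP us) (eq_cardT s_full) -cardT.
have pos_z v : pos z (inl v) = (index v s).+1.
  by rewrite /pos index_cat mem_map ?index_map ?s_full //; exact: inl_inj.
exists (Tuple size_z) => //; apply/andP; split.
  rewrite /= cat_uniq !map_inj_uniq ?us ?enum_uniq //; try by move=> ? ? [].
  by rewrite -enumT enum_uniq andbT; apply/hasPn => _ /mapP [A _ ->]; apply/mapP => [[v]].
apply/forallP => A; apply/forall_inP => u _; rewrite /= pos_z /pos index_cat.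
have -> : (inr A \in map inl s) = false by apply/mapP => [[v]].
by rewrite size_map ltnS ltn_addr // index_mem.
Qed.

Hypothesis sg : simple_graph e.

Definition vertex_load (x : seq (elt e)) : nat := \sum_v (deg e v).+2 * pos x (inl v).

Lemma cost_add_vertex_load x : is_cseq x -> cost x + vertex_load x = 2 * 'C((ell e).+1, 2).
Proof.
move=> cx; have ends_le (A : edge e) : \sum_(u in val A) pos x (inl u) <= 2 * pos x (inr A).
  case/andP: cx => _ /forallP /(_ A) /forall_inP lt_ends.
  apply: (@leq_trans (\sum_(u in val A) pos x (inr A))).
    by apply: leq_sum => u /lt_ends /ltnW.
  by rewrite sum_nat_const leq_mul2r card_edge_le2 orbT.
have cost_ends : cost x + \sum_v deg e v * pos x (inl v) = 2 * \sum_A pos x (inr A).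
  rewrite -(sum_edge_ends sg) /cost -big_split big_distrr /=.
  by apply: eq_bigr => A _; rewrite subnK // ends_le.
rewrite -(sum_pos_cseq cx) big_sumType /= /vertex_load.
under eq_bigr do rewrite -addn2 mulnDl.
by rewrite big_split /= -big_distrr addnA cost_ends mulnDr addnC.
Qed.

Lemma nu_star_add_vertex_load z : is_cseq z ->
    (forall x, is_cseq x -> vertex_load z <= vertex_load x) ->
  nu_star e + vertex_load z = 2 * 'C((ell e).+1, 2).
Proof.
move=> cz z_min; have cost_z := cost_add_vertex_load cz.
have ge_nu : cost z <= nu_star e := leq_bigmax_cond z cz.
have le_nu : nu_star e <= cost z.
  apply/bigmax_leqP => x cx; have := cost_add_vertex_load cx; have := z_min x cx; lia.
lia.
Qed.

End ConstructionSequences.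

Section RegularGraph.
Variables (T : finType) (e : rel T) (r : nat).
Hypotheses (sg : simple_graph e) (reg : regular e r).

Lemma handshake_regular : r * #|T| = 2 * #|{: edge e}|.
Proof.
rewrite -(handshake sg) mulnC -sum_nat_const.
by apply: eq_bigr => v _; rewrite /deg reg.
Qed.

Lemma nu_star_regular : nu_star e + r.+2 * 'C(#|T|.+1, 2) = 2 * 'C((ell e).+1, 2).
Proof.
have load (x : seq (elt e)) : vertex_load x = r.+2 * \sum_v pos x (inl v).
  by rewrite /vertex_load big_distrr; apply: eq_bigr => v _; rewrite /deg reg.
have [z cz pos_z] := vertices_first_cseq e (enum_uniq T) (mem_enum T).
have load_z : vertex_load z = r.+2 * 'C(#|T|.+1, 2).
  by rewrite load -(sum_index_enum (enum_uniq T) (mem_enum T)); congr (_ * _); apply: eq_bigr.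
rewrite -load_z (nu_star_add_vertex_load sg cz) // => x cx.
by rewrite load_z load leq_mul2l bin2_card_leq_sum_pos ?orbT //; exact: inl_inj.
Qed.

End RegularGraph.

Section DisjointUnion.
Variables (T1 T2 : finType) (e1 : rel T1) (e2 : rel T2).
Local Notation E := (sum_rel e1 e2).

Lemma deg_sum_rel_inl (v : T1) : deg E (inl v) = deg e1 v.
Proof.
rewrite /deg -(card_imset _ (@inl_inj T1 T2)); apply: eq_card => -[w|w]; rewrite !inE /=.
  by rewrite mem_imset ?inE //; exact: inl_inj.
by apply/esym/imsetP => -[y _].
Qed.

Lemma deg_sum_rel_inr (v : T2) : deg E (inr v) = deg e2 v.
Proof.
rewrite /deg -(card_imset _ (@inr_inj T1 T2)); apply: eq_card => -[w|w]; rewrite !inE /=.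
  by apply/esym/imsetP => -[y _].
by rewrite mem_imset ?inE //; exact: inr_inj.
Qed.

Hypotheses (sg1 : simple_graph e1) (sg2 : simple_graph e2).

Lemma sum_rel_simple : simple_graph E.
Proof.
case: sg1 sg2 => [sym1 irr1] [sym2 irr2]; split; first by case=> a [] b //=.
by case=> a /=; rewrite ?irr1 ?irr2.
Qed.

Lemma card_edge_sum_rel : #|{: edge E}| = #|{: edge e1}| + #|{: edge e2}|.
Proof.
have := handshake sum_rel_simple; rewrite big_sumType /=.
under eq_bigr do rewrite deg_sum_rel_inl.
under [X in _ + X = _]eq_bigr do rewrite deg_sum_rel_inr.
rewrite (handshake sg1) (handshake sg2); lia.
Qed.

Lemma ell_sum_rel : ell E = ell e1 + ell e2.
Proof. by rewrite /ell card_sum card_edge_sum_rel; lia. Qed.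

Variables (r1 r2 : nat).
Hypotheses (reg1 : regular e1 r1) (reg2 : regular e2 r2) (le_r21 : r2 <= r1).

Lemma nu_star_sum_rel :
  nu_star E + (r2.+2 * 'C((#|T1| + #|T2|).+1, 2) + (r1 - r2) * 'C(#|T1|.+1, 2))
  = 2 * 'C((ell E).+1, 2).
Proof.
have load (x : seq (elt E)) : vertex_load x =
    r2.+2 * \sum_v pos x (inl v) + (r1 - r2) * \sum_(v : T1) pos x (inl (inl v)).
  rewrite /vertex_load !big_sumType /=.
  under eq_bigr do rewrite deg_sum_rel_inl /deg reg1.
  under [X in _ + X = _]eq_bigr do rewrite deg_sum_rel_inr /deg reg2.
  by rewrite -!big_distrr /= mulnDr addnAC -mulnDl !addSn subnKC.
have [z cz pos_z] := vertices_first_cseq E (sum_enum_uniq T1 T2) (@mem_sum_enum T1 T2).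
have all_z : \sum_v pos z (inl v) = 'C((#|T1| + #|T2|).+1, 2).
  rewrite -card_sum -(sum_index_enum (sum_enum_uniq T1 T2) (@mem_sum_enum T1 T2)).
  exact: eq_bigr.
have left_z : \sum_(v : T1) pos z (inl (inl v)) = 'C(#|T1|.+1, 2).
  rewrite -(sum_index_enum (enum_uniq T1) (mem_enum T1)); apply: eq_bigr => v _.
  have inl1_inj := @inl_inj T1 T2.
  by rewrite pos_z index_cat mem_map // -enumT mem_enum index_map.
rewrite -all_z -left_z -load (nu_star_add_vertex_load sum_rel_simple cz) // => x cx.
rewrite !load all_z left_z leq_add // leq_mul2l ?orbT //.
  by rewrite -card_sum bin2_card_leq_sum_pos //; exact: inl_inj.
rewrite (bin2_card_leq_sum_pos (g := inl \o inl)) ?orbT //.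
exact/inj_comp/inl_inj/inl_inj.
Qed.

End DisjointUnion.

Unset Implicit Arguments.

Theorem theorem5 (T1 T2 : finType) (e1 : rel T1) (e2 : rel T2) (r1 r2 : nat) :
  simple_graph e1 -> simple_graph e2 ->
  regular e1 r1 -> regular e2 r2 -> r2 < r1 ->
  nu_star (sum_rel e1 e2) =
    nu_star e1 + nu_star e2
    + 2 * #|{: edge e1}| * (#|T2| + #|{: edge e2}|).
Proof.
move=> sg1 sg2 reg1 reg2 lt_r21.
have nuE := nu_star_sum_rel sg1 sg2 reg1 reg2 (ltnW lt_r21).
have nu1 := nu_star_regular sg1 reg1.
have nu2 := nu_star_regular sg2 reg2.
have hs1 := handshake_regular sg1 reg1.
have hs2 := congr1 (muln #|T1|) (handshake_regular sg2 reg2).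
move: nuE nu1 nu2 hs1 hs2; rewrite (ell_sum_rel sg1 sg2) /ell !bin2S_add.
rewrite -[r1](subnKC (ltnW lt_r21)) addKn.
set p1 := #|T1|; set p2 := #|T2|; set q1 := #|{: edge e1}|; set q2 := #|{: edge e2}|.
nia.
Qed.
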